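(* For any $a,b\in M^*$, the intersection $S_a\cap S_b^{\varphi}$ contains at most one point, where $S_b^{\varphi}=\{F(c^qb^q+ci): c\in M^*\}$.
   Context: Let $q$ be a prime power, $n>1$ an integer, $F=\mathbb F_q\subset M=\mathbb F_{q^n}\subset L=\mathbb F_{q^{2n}}$. Regard $L$ as a $2n$-dimensional $F$-vector space; $\mathrm{PG}(2n-1,q)$ has as points the subspaces $Fz$, $z\in L^*$. Fix $i\in L\setminus M$, so every $z\in L$ is uniquely $z=a+ib$ with $a,b\in M$. For $a\in M$ let $S_a=\{F c(a+i): c\in M^*\}$. Let $\hat\varphi:L\to L$ be the $F$-linear bijection $\hat\varphi(a+ib)=a^q+ib$ ($a,b\in M$) and $\varphi$ the induced projectivity of $\mathrm{PG}(2n-1,q)$; $S_b^\varphi$ denotes the image of $S_b$ under $\varphi$. *)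

From HB Require Import structures.
From mathcomp Require Import all_boot all_order all_algebra all_field.
Unset Strict Implicit. Unset Printing Implicit Defensive.
Import GRing.Theory.
Local Open Scope ring_scope.

Section Defs.
Variable L : finFieldType. Variables q n : nat.

(* F = F_q inside L : the elements fixed by x |-> x^q *)
Definition Fset : {set L} := [set x : L | x ^+ q == x].
(* M = F_{q^n} inside L : the elements fixed by x |-> x^(q^n) *)
Definition Mset : {set L} := [set x : L | x ^+ (q ^ n) == x].
Definition Mstar : {set L} := Mset :\ 0.

(* the projective point F z (an F-subspace of L), z in L^* *)
Definition pt (z : L) : {set L} := [set lam * z | lam in Fset].

Definition Sset (i a : L) : {set {set L}} := [set pt (c * (a + i)) | c in Mstar].

(* S_b^phi = image of S_b under phi, where phihat(x + i y) = x^q + i y (x,y in M):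
   phihat(c(b+i)) = phihat(cb + i c) = (cb)^q + c i = c^q b^q + c i. *)
Definition Sphi (i b : L) : {set {set L}} :=
  [set pt (c ^+ q * b ^+ q + c * i) | c in Mstar].
End Defs.

From HB Require Import structures.
From mathcomp Require Import all_boot all_order all_algebra all_field.
From mathcomp Require Import ring.
Import GRing.Theory.
Local Open Scope ring_scope.

(* Write L = M + iM.  A point of S_a is F c(a+i) and a point of
   S_b^phi is F(d^q b^q + d i), with c, d in M^*.  If they coincide, then
   d^q b^q + d i = lam c a + lam c i for some lam in F; since i is not in M,
   the coordinates on the "basis" 1, i agree: d = lam c and d^q b^q = d a.
   Hence every common point is F d(a+i) with d^(q-1) = a / b^q.  For two such
   d1, d2 the ratio d2/d1 satisfies (d2/d1)^q = d2/d1, i.e. it lies in F^*,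
   so both give the same projective point: the intersection has at most one
   element. *)

Section ProjectivePoints.
Variables (L : finFieldType) (q : nat).

Lemma pt_self (z : L) : z \in pt L q z.
Proof. by apply/imsetP; exists 1; rewrite ?mul1r // inE expr1n. Qed.

Lemma pt_scale (z mu : L) : mu != 0 -> mu ^+ q = mu -> pt L q (mu * z) = pt L q z.
Proof.
move=> mu0 hmu; apply/setP => x; apply/imsetP/imsetP => -[lam].
- rewrite inE => /eqP hl ->; exists (lam * mu); first by rewrite inE exprMn hl hmu.
  by rewrite mulrA.
- rewrite inE => /eqP hl ->; exists (lam / mu); first by rewrite inE exprMn exprVn hl hmu.
  by rewrite mulrA divfK.
Qed.

Lemma pt_eq (z w : L) : pt L q z = pt L q w -> exists2 lam, lam ^+ q = lam & w = lam * z.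
Proof.
move=> h; have := pt_self w; rewrite -h => /imsetP [lam].
by rewrite inE => /eqP ? ->; exists lam.
Qed.

End ProjectivePoints.
Arguments pt_eq {L q z w}.
Arguments pt_scale {L q} z {mu}.

Section SubfieldM.
Variables (L : finFieldType) (q n : nat).
Local Notation M := (Mset L q n).

Lemma Mset_mul (x y : L) : x \in M -> y \in M -> x * y \in M.
Proof. by rewrite !inE exprMn => /eqP -> /eqP ->. Qed.

Lemma Mset_inv (x : L) : x \in M -> x^-1 \in M.
Proof. by rewrite !inE exprVn => /eqP ->. Qed.

Lemma Mset_exp (x : L) (j : nat) : x \in M -> x ^+ j \in M.
Proof. by rewrite !inE exprAC => /eqP ->. Qed.

Lemma Fset_sub_Mset (x : L) : x ^+ q = x -> x \in M.
Proof.
move=> hx; rewrite inE; apply/eqP; elim: n => [|j IH]; first by rewrite expr1.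
by rewrite expnSr exprM IH.
Qed.

(* Additive closure: x |-> x^(q^n) is additive when q^n is a power of the
   characteristic. *)
Lemma Mset_sub (x y : L) : [pchar L].-nat (q ^ n)%N ->
  x \in M -> y \in M -> x - y \in M.
Proof.
move=> hchar; rewrite !inE => /eqP hx /eqP hy.
by rewrite exprDn_pchar // exprNn_pchar // hx hy.
Qed.

Lemma Mset_coords_eq (i x y x' y' : L) : [pchar L].-nat (q ^ n)%N -> i \notin M ->
  x \in M -> y \in M -> x' \in M -> y' \in M ->
  x + y * i = x' + y' * i -> x = x' /\ y = y'.
Proof.
move=> hchar hi xM yM x'M y'M E.
have yy : y = y'.
  apply/eqP; apply: contraNT hi => ne.
  have ne' : y - y' != 0 by rewrite subr_eq0.
  have -> : i = (x' - x) / (y - y').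
    by apply: (mulIf ne'); rewrite divfK // mulrBr !(mulrC i); apply/eqP;
       rewrite subr_eq addrAC -E; apply/eqP; ring.
  by apply: Mset_mul; [exact: Mset_sub | apply/Mset_inv/Mset_sub].
by split=> //; apply: (addIr (y * i)); rewrite E yy.
Qed.

End SubfieldM.
Arguments Mset_mul {L q n x y}.
Arguments Fset_sub_Mset {L q n x}.
Arguments Mset_exp {L q n x} j.
Arguments Mset_coords_eq {L q n i x y x' y'}.

Section Intersection.
Variables (L : finFieldType) (q n : nat) (i a b : L).
Hypothesis hchar : [pchar L].-nat (q ^ n)%N.
Hypothesis hi : i \notin Mset L q n.
Hypotheses (aM : a \in Mset L q n) (bM : b \in Mset L q n).

Lemma common_point_form (P : {set L}) : P \in Sset L q n i a :&: Sphi L q n i b ->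
  exists2 d, d != 0 /\ d * a = d ^+ q * b ^+ q & P = pt L q (d * (a + i)).
Proof.
rewrite inE => /andP [/imsetP [c cS ->] /imsetP [d dS]].
move: cS dS; rewrite !in_setD1 => /andP [c0 cM] /andP [d0 dM] Heq.
have [lam hl E] := pt_eq Heq.
have lcM : lam * c \in Mset L q n := Mset_mul (Fset_sub_Mset hl) cM.
have E' : d ^+ q * b ^+ q + d * i = lam * c * a + lam * c * i.
  by rewrite E; ring.
have [Ex Ey] := Mset_coords_eq hchar hi (Mset_mul (Mset_exp q dM) (Mset_exp q bM))
  dM (Mset_mul lcM aM) lcM E'.
have Ea : d * a = d ^+ q * b ^+ q by rewrite Ex Ey.
exists d => //; rewrite Heq -Ea; congr (pt L q _); ring.
Qed.

(* Two solutions of d a = d^q b^q differ by a factor in F^*, hence give the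
   same point. *)
Lemma solutions_same_point (d1 d2 : L) : b != 0 ->
  d1 != 0 -> d1 * a = d1 ^+ q * b ^+ q ->
  d2 != 0 -> d2 * a = d2 ^+ q * b ^+ q ->
  pt L q (d1 * (a + i)) = pt L q (d2 * (a + i)).
Proof.
move=> b0 d10 h1 d20 h2.
have bq0 : b ^+ q != 0 by rewrite expf_neq0.
have cross : d2 ^+ q * d1 = d2 * d1 ^+ q.
  by apply: (mulIf bq0); rewrite [LHS]mulrAC -h2 -[RHS]mulrA -h1; ring.
have mu0 : d2 / d1 != 0 by rewrite mulf_neq0 ?invr_eq0.
have muq : (d2 / d1) ^+ q = d2 / d1.
  apply: (mulIf (expf_neq0 q d10)).
  by rewrite exprMn exprVn mulfVK ?expf_neq0 // mulrAC -cross mulfK.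
by rewrite -(pt_scale (d1 * (a + i)) mu0 muq) mulrA divfK.
Qed.

End Intersection.
Arguments common_point_form {L q n i a b}.
Arguments solutions_same_point {L q i a b d1 d2}.

Lemma pchar_nat_qpow {L : finFieldType} {q n : nat} :
  (exists p k, prime p /\ q = (p ^ k.+1)%N) -> #|L| = (q ^ (2 * n))%N ->
  [pchar L].-nat (q ^ n)%N.
Proof.
move=> [p [k [pp qE]]] hL.
have pL : p \in [pchar L].
  by apply: (card_finPcharP (n := (k.+1 * (2 * n))%N)) => //; rewrite hL qE -expnM.
by rewrite qE -expnM pnatX pnatE // pL.
Qed.

Theorem mainTheorem9 (L : finFieldType) (q n : nat)
  (hq : exists p k, prime p /\ q = (p ^ k.+1)%N)
  (hn : (1 < n)%N)
  (hL : #|L| = (q ^ (2 * n))%N)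
  (i : L) (hi : i \notin Mset L q n)
  (a b : L) (ha : a \in Mstar L q n) (hb : b \in Mstar L q n) :
  (#|Sset L q n i a :&: Sphi L q n i b| <= 1)%N.
Proof.
have hchar := pchar_nat_qpow hq hL.
move: ha hb; rewrite !in_setD1 => /andP [_ aM] /andP [b0 bM].
apply/card_le1_eqP => P1 P2.
move=> /(common_point_form hchar hi aM bM) [d1 [d10 h1] ->].
move=> /(common_point_form hchar hi aM bM) [d2 [d20 h2] ->].
exact: solutions_same_point b0 d20 h2 d10 h1.
Qed.
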